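(* Let $n\in\mathbf{N}$ and $A\subset[n]$ have property P. Let $Z$ and $Z^{1(2)}_{(\frac29,\frac13]}$ be as defined in the context. Then for each $i\in\{1,3\}$, $$\left|Z^{1(2)}_{(\frac29,\frac13]}\right|+\left|A\cap\left(\tfrac{2n}{3},n\right]\cap(i+4\mathbf{Z})\right|\leqslant\frac{n}{12}+3.$$
   Context: A set $A\subset\mathbf{N}$ has property P if there are no $x,y,z\in A$ (not necessarily distinct $x,y$) with $z<x$, $z<y$ and $z\mid x+y$. Intervals denote sets of integers. For $a\in A\cap[1,\frac n2]$ let $m_a\geqslant0$ be the unique integer with $3^{m_a}a\in(\frac n6,\frac n2]$. Define $Z=\{3^{m_a}a: a\in A\cap[1,\frac n2],\ 3^{m_a}a\in(\frac{2n}{9},\frac n2]\}\cup\{2\cdot3^{m_a}a: a\in A\cap[1,\frac n2],\ 3^{m_a}a\in(\frac n6,\frac{2n}{9}]\}\subset(\frac{2n}{9},\frac n2]$, and $Z^{1(2)}_{(\frac29,\frac13]}=Z\cap(\frac{2n}{9},\frac n3]\cap(1+2\mathbf{Z})$. *)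

From mathcomp Require Import all_boot all_order all_algebra.
Set Implicit Arguments. Unset Strict Implicit. Unset Printing Implicit Defensive.

Definition propP (A : pred nat) : Prop :=
  forall x y z, A x -> A y -> A z -> z < x -> z < y -> ~~ (z %| x + y).

(* m is the (unique) exponent with 3^m a in (n/6, n/2], i.e. n < 6*3^m*a and 2*3^m*a <= n. *)
Definition is_m (n a m : nat) : bool := (n < 6 * (3 ^ m * a)) && (2 * (3 ^ m * a) <= n).

(* z \in Z : z = 3^{m_a} a with 3^{m_a} a in (2n/9, n/2], or z = 2*3^{m_a} a with
   3^{m_a} a in (n/6, 2n/9], for some a in A /\ [1, n/2].
   The witnesses a and m are bounded by n (automatic: a <= n/2, 3^m <= n/2). *)
Definition inZ (A : pred nat) (n z : nat) : bool :=
  [exists a : 'I_n.+1, [exists m : 'I_n.+1,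
     [&& A a, 1 <= a, 2 * a <= n, is_m n a m &
      ((2 * n < 9 * (3 ^ m * a)) && (z == 3 ^ m * a))
      || ((9 * (3 ^ m * a) <= 2 * n) && (z == 2 * (3 ^ m * a)))]]].

(* |Z^{1(2)}_{(2/9,1/3]}| = |Z /\ (2n/9, n/3] /\ (1 + 2Z)| ; Z lies in [0, n]. *)
Definition cardZ_odd (A : pred nat) (n : nat) : nat :=
  #|[set z : 'I_n.+1 | [&& inZ A n z, 2 * n < 9 * z, 3 * z <= n & odd z]]|.

Definition cardA_top (A : pred nat) (n i : nat) : nat :=
  #|[set x : 'I_n.+1 | [&& A x, 2 * n < 3 * x & x %% 4 == i %% 4]]|.

(** An odd [z] of [Z] in [(2n/9, n/3]] is a multiple [3^m a] of some [a] in [A] with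
    [a <= z], and [a] divides [6z].  Property P therefore forbids [3z] in [A]
    ([3z + 3z = 6z]) and forbids [3z - 2], [3z + 2] both in [A] (their sum is [6z]).
    Since [3z] is odd, [3z] or one of [3z -+ 2] lies in the residue class [i] modulo 4
    and outside [A]; distinct [z] give points at distance at least [6 - 4 > 0].  This
    injects [Z^{1(2)}_{(2/9,1/3]}] into the complement of [A] inside
    [(2n/3 - 2, n + 2] /\ (i + 4Z)], a class of at most [n/12 + 3] integers. *)
From mathcomp Require Import all_boot all_order all_algebra.
From mathcomp Require Import zify lra.
Import Order.TTheory GRing.Theory Num.Theory.

Set Implicit Arguments.
Unset Strict Implicit.
Unset Printing Implicit Defensive.

Lemma inZ_odd_divisor (A : pred nat) (n z : nat) : inZ A n z -> odd z ->
  exists a, [/\ A a, 1 <= a, a <= z & a %| z].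
Proof.
case/existsP => a /existsP [m /and5P [Aa a_gt0 _ _]].
case/orP => /andP [_ /eqP ->] odd_z; last by rewrite oddM in odd_z.
exists a; split => //; last exact: dvdn_mull.
by apply: leq_pmull; rewrite expn_gt0.
Qed.

Section PropertyP.

Variable A : pred nat.
Hypothesis hP : propP A.

Lemma propP_notin_of_dvd_double (d w : nat) :
  A d -> d < w -> d %| 2 * w -> ~~ A w.
Proof.
move=> Ad lt_dw dvd_d2w; apply/negP => Aw.
by move: (hP Aw Aw Ad lt_dw lt_dw); rewrite addnn -mul2n dvd_d2w.
Qed.

Lemma propP_notin_pair (d w : nat) :
  A d -> d + 2 < w -> d %| 2 * w -> ~~ (A (w - 2) && A (w + 2)).
Proof.
move=> Ad lt_dw dvd_d2w; apply/negP => /andP [Awm Awp].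
have := hP Awm Awp Ad.
by rewrite (_ : w - 2 + (w + 2) = 2 * w) ?dvd_d2w; [lia | lia].
Qed.

End PropertyP.

Definition move_to_class (A : pred nat) (i w : nat) : nat :=
  if w %% 4 == i %% 4 then w else if A (w + 2) then w - 2 else w + 2.

Lemma move_to_class_near (A : pred nat) (i w : nat) :
  w - 2 <= move_to_class A i w <= w + 2.
Proof. by rewrite /move_to_class; repeat case: ifP => _; lia. Qed.

Lemma move_to_class_lt (A : pred nat) (i w w' : nat) :
  w + 5 <= w' -> move_to_class A i w < move_to_class A i w'.
Proof.
have /andP [_ le_w] := move_to_class_near A i w.
by have /andP [ge_w' _] := move_to_class_near A i w'; lia.
Qed.

Lemma move_to_class_mod (A : pred nat) (i w : nat) : odd i -> odd w -> 2 <= w ->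
  move_to_class A i w %% 4 = i %% 4.
Proof.
move=> odd_i odd_w w_ge2; have := modn2 i; have := modn2 w.
rewrite odd_i odd_w /move_to_class => w_mod2 i_mod2.
by case: eqP => // ne; case: ifP => _; lia.
Qed.

Lemma move_to_class_notin (A : pred nat) (i w : nat) :
  ~~ A w -> ~~ (A (w - 2) && A (w + 2)) -> ~~ A (move_to_class A i w).
Proof.
rewrite /move_to_class => Aw Apair; case: ifP => // _.
by case: ifP => [Awp | /negbT //]; apply: contra Apair => ->; rewrite Awp.
Qed.

Lemma inZ_odd_triple_avoids (A : pred nat) (n z : nat)
  (hA : forall x, A x -> 1 <= x <= n) (hP : propP A) :
  inZ A n z -> odd z -> 2 * n < 9 * z ->
  ~~ A (3 * z) /\ ~~ (A (3 * z - 2) && A (3 * z + 2)).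
Proof.
move=> Zz odd_z lt_2n_9z.
have [a [Aa a_gt0 le_az dvd_az]] := inZ_odd_divisor Zz odd_z.
have dvd_a6z : a %| 2 * (3 * z) by rewrite mulnA dvdn_mull.
split; first by apply: (propP_notin_of_dvd_double hP Aa) => //; lia.
apply/negP => /andP [Am Ap]; have /andP [_ le_n] := hA _ Ap.
have lt_a2_3z : a + 2 < 3 * z by lia.
by move: (propP_notin_pair hP Aa lt_a2_3z dvd_a6z); rewrite Am Ap.
Qed.

Lemma card_mod_class_le (N L k r : nat) (S : {set 'I_N.+1}) :
  (forall y : 'I_N.+1, y \in S -> L <= y /\ y %% k = r) ->
  #|S| <= N %/ k - L %/ k + 1.
Proof.
move=> hS; pose p (y : 'I_N.+1) : 'I_(N %/ k - L %/ k).+1 := inord (y %/ k - L %/ k).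
have le_div (y : 'I_N.+1) : y %/ k <= N %/ k by rewrite leq_div2r // -ltnS.
have p_val y : nat_of_ord (p y) = y %/ k - L %/ k.
  by rewrite inordK // ltnS leq_sub2r.
have p_inj : {in S &, injective p}.
  move=> y y' /hS [Ly ry] /hS [Ly' ry'] /(congr1 val); rewrite /= !p_val => eq_q.
  have Lk_le x : L <= x -> L %/ k <= x %/ k by move=> ?; exact: leq_div2r.
  apply/val_inj; rewrite /= (divn_eq y k) (divn_eq y' k) ry ry'.
  by congr (_ * _ + _); move: (Lk_le _ Ly) (Lk_le _ Ly') eq_q; lia.
by rewrite -(card_in_imset p_inj) addn1 -[X in _ <= X]card_ord max_card.
Qed.

Section Counting.

Variables (n i : nat) (A : pred nat).
Hypotheses (hA : forall x, A x -> 1 <= x <= n) (hP : propP A) (odd_i : odd i).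

Let ZS := [set z : 'I_n.+1 | [&& inZ A n z, 2 * n < 9 * z, 3 * z <= n & odd z]].
Let AS := [set x : 'I_n.+1 | [&& A x, 2 * n < 3 * x & x %% 4 == i %% 4]].
(* [(2 * n - 3) %/ 3 <= y] is a rounding of [2n/3 - 2 < y]. *)
Let target := [set y : 'I_n.+3 | ((2 * n - 3) %/ 3 <= y) && (y %% 4 == i %% 4)].

Lemma move_to_class_triple (z : nat) :
  inZ A n z -> 2 * n < 9 * z -> 3 * z <= n -> odd z ->
  let y := move_to_class A i (3 * z) in
  [/\ y <= n + 2, (2 * n - 3) %/ 3 <= y, y %% 4 = i %% 4 & ~~ A y].
Proof.
move=> Zz lt_2n_9z le_3z_n odd_z y.
have [notA_3z notA_pair] := inZ_odd_triple_avoids hA hP Zz odd_z lt_2n_9z.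
have z_gt0 := odd_gt0 odd_z.
have /andP [y_ge y_le] := move_to_class_near A i (3 * z).
split; [lia | lia | | exact: move_to_class_notin].
by apply: move_to_class_mod; rewrite ?oddM ?odd_z //; lia.
Qed.

Lemma card_Z_A_le_target : #|ZS| + #|AS| <= #|target|.
Proof.
pose g (z : 'I_n.+1) : 'I_n.+3 := inord (move_to_class A i (3 * z)).
pose h (x : 'I_n.+1) : 'I_n.+3 := inord x.
have ZSP z : z \in ZS -> [/\ inZ A n z, 2 * n < 9 * z, 3 * z <= n & odd z].
  by rewrite inE => /and4P.
have g_val z : z \in ZS -> nat_of_ord (g z) = move_to_class A i (3 * z).
  move=> /ZSP [Zz lt_9z le_3z odd_z]; have [le_y _ _ _] := move_to_class_triple Zz lt_9z le_3z odd_z.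
  by rewrite inordK //; lia.
have h_val x : nat_of_ord (h x) = x by rewrite inordK //; have := ltn_ord x; lia.
have g_inj : {in ZS &, injective g}.
  move=> z z' Zz Zz' /(congr1 val); rewrite /= !g_val // => eq_y.
  have [_ _ _ odd_z] := ZSP _ Zz; have [_ _ _ odd_z'] := ZSP _ Zz'.
  have := modn2 z; have := modn2 z'; rewrite odd_z odd_z' => z'_mod2 z_mod2.
  apply/eqP; rewrite -val_eqE /=; case: ltngtP => // lt_zz'.
    by have := @move_to_class_lt A i (3 * z) (3 * z'); rewrite eq_y ltnn; lia.
  by have := @move_to_class_lt A i (3 * z') (3 * z); rewrite eq_y ltnn; lia.
have h_inj : injective h by move=> x x' /(congr1 val); rewrite /= !h_val => /val_inj.
have disj : [disjoint g @: ZS & h @: AS].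
  rewrite disjoints_subset; apply/subsetP => _ /imsetP [z Zz ->]; rewrite inE.
  apply/imsetP => -[x]; rewrite inE => /and3P [Ax _ _].
  move/(congr1 val); rewrite /= g_val // h_val => eq_zx.
  have [Zz' lt_9z le_3z odd_z] := ZSP _ Zz.
  by have [_ _ _] := move_to_class_triple Zz' lt_9z le_3z odd_z; rewrite eq_zx Ax.
rewrite -(card_in_imset g_inj) -(card_imset _ h_inj) -cardsUI (disjoint_setI0 disj) cards0 addn0.
apply/subset_leq_card/subsetP => y; rewrite inE => /orP [] /imsetP [x Sx ->]; rewrite inE.
  have [Zx lt_9x le_3x odd_x] := ZSP _ Sx.
  have [_ le_y mod_y _] := move_to_class_triple Zx lt_9x le_3x odd_x.
  by rewrite g_val // le_y mod_y eqxx.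
by move: Sx; rewrite inE h_val => /and3P [_ lt_3x ->]; rewrite andbT; lia.
Qed.

Lemma card_Z_A_le : 12 * (cardZ_odd A n + cardA_top A n i) <= n + 36.
Proof.
have le_target : #|target| <= n.+2 %/ 4 - (2 * n - 3) %/ 3 %/ 4 + 1.
  by apply: (@card_mod_class_le _ _ _ (i %% 4)) => y; rewrite inE => /andP [? /eqP].
by have := card_Z_A_le_target; rewrite -/(cardZ_odd A n) -/(cardA_top A n i); lia.
Qed.

End Counting.

Theorem mainTheorem15 (n : nat) (A : pred nat)
  (hA : forall x, A x -> 1 <= x <= n) (hP : propP A) (i : nat) (hi : (i == 1) || (i == 3)) :
  (((cardZ_odd A n + cardA_top A n i)%:R : rat) <= n%:R / 12%:R + 3%:R)%R.
Proof.
have odd_i : odd i by case/orP: hi => /eqP ->.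
have : ((12 * (cardZ_odd A n + cardA_top A n i))%:R <= (n + 36)%:R :> rat)%R.
  by rewrite ler_nat (card_Z_A_le hA hP odd_i).
rewrite natrM natrD; lra.
Qed.
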